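(* Let $R=(v_1,\dots,v_\ell)$ be a route, $\bar y\in\mathbb{R}^{[N]\times V_+}_{\ge0}$ and $\xi\in[N]$. There exist $f\in\mathbb{R}^A_{\ge0}$ and $g\in\mathbb{R}^{V_+}_{\ge0}$ satisfying $f_{(v_{i-1},v_i)}+d^\xi(v_i)=f_{(v_i,v_{i+1})}+g_{v_i}$ for all $i\in[\ell]$, $f_{(v_{i-1},v_i)}\le C$ for all $i\in[\ell+1]$, and $g_{v_i}\le C\,\bar y^\xi_{v_i}$ for all $i\in[\ell]$, if and only if $$\bar y^\xi(R')\ge\frac{d^\xi(R')}{C}-1\quad\text{for all subroutes } R'\subseteq R.$$
   Context: $G=(V,E)$ complete undirected graph with $V=\{0\}\cup V_+$ ($0$ depot, $V_+$ customers); $D=(V,A)$ replaces each edge by two opposite arcs. Capacity $C\in\mathbb{Q}_{>0}$; scenarios $\xi\in[N]$ with demand vectors $d^\xi\in\mathbb{Q}^{V_+}_{\ge0}$, $d^\xi(v)\le C$. A route $R=(v_1,\dots,v_\ell)$ is the cycle $0,v_1,\dots,v_\ell,0$ through distinct customers, $V_+(R)=\{v_1,\dots,v_\ell\}$, $v_0=v_{\ell+1}=0$. A subroute of $R$ is $R'=(v_i,\dots,v_j)$ with $1\le i\le j\le\ell$. For a vector $f$, $f(S)=\sum_{i\in S}f(i)$; $\bar y^\xi(R')=\sum_{v\in V_+(R')}\bar y^\xi_v$ and $d^\xi(R')=d^\xi(V_+(R'))$. *)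

From mathcomp Require Import all_boot all_order all_algebra.
Set Implicit Arguments. Unset Strict Implicit. Unset Printing Implicit Defensive.
Import Order.TTheory GRing.Theory Num.Theory.
Local Open Scope ring_scope.

Definition is_route (T : eqType) (depot : T) (r : seq T) : bool :=
  uniq r && all (fun v => v != depot) r.

(* v_i of the route, with v_0 = v_{l+1} = depot (indices 1..l give customers). *)
Definition rvtx (T : Type) (depot : T) (r : seq T) (i : nat) : T :=
  if (1 <= i <= size r)%N then nth depot r i.-1 else depot.

(** The forward direction is a telescoping argument: along a subroute the flow
    conservation equations sum to [d(R') - g(R') = f_out - f_in <= C], and
    [g(R') <= C ybar(R')].  Conversely, the load carried on the arc entering
    [v_i] is chosen by Lindley's recursion [f_1 = 0],
    [f_(i+1) = max(0, f_i + d(v_i) - C ybar(v_i))]: then [g = f_i + d - f_(i+1)]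
    lies in [[0, C ybar(v_i)]], and [f_i] is [0] or at most the sum of
    [d - C ybar] over a subroute ending at [v_(i-1)], which the hypothesis
    bounds by [C]. *)
From mathcomp Require Import all_boot all_order all_algebra.
From mathcomp Require Import lra zify.
Import Order.TTheory GRing.Theory Num.Theory.
Set Implicit Arguments. Unset Strict Implicit.
Local Open Scope ring_scope.

Section RouteVertices.
Variables (T : eqType) (depot : T) (r : seq T).

Lemma rvtx0 : rvtx depot r 0 = depot.
Proof. by []. Qed.

Lemma rvtx_size_succ : rvtx depot r (size r).+1 = depot.
Proof. by rewrite /rvtx ltnn andbF. Qed.

Lemma rvtxE i : (1 <= i <= size r)%N -> rvtx depot r i = nth depot r i.-1.
Proof. by rewrite /rvtx => ->. Qed.

Lemma mem_rvtx i : (1 <= i <= size r)%N -> rvtx depot r i \in r.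
Proof. by move=> Hi; rewrite rvtxE // mem_nth //; case: i Hi. Qed.

Hypothesis route_r : is_route depot r.

Lemma route_depot_notin : depot \notin r.
Proof. by case/andP: route_r => _ /allP ndepot; apply/negP => /ndepot/eqP. Qed.

Lemma rvtx_neq_depot i : (1 <= i <= size r)%N -> rvtx depot r i != depot.
Proof.
by move=> /mem_rvtx Hi; apply: contraTneq Hi => ->; exact: route_depot_notin.
Qed.

Lemma index_rvtx i : (1 <= i <= (size r).+1)%N -> index (rvtx depot r i) r = i.-1.
Proof.
case/andP=> i_gt0; rewrite leq_eqVlt ltnS => /orP[/eqP-> | i_le].
  by rewrite rvtx_size_succ memNindex // route_depot_notin.
case/andP: route_r => uniq_r _.
by rewrite rvtxE ?i_gt0 // index_uniq //; case: i i_gt0 i_le.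
Qed.

Lemma rvtx_pred_neq i : (1 <= i <= size r)%N -> rvtx depot r i.-1 != rvtx depot r i.
Proof.
case: i => [//|[|i]] Hi.
  by rewrite rvtx0 eq_sym rvtx_neq_depot.
apply: contraTneq isT => /(congr1 (index^~ r)).
by rewrite !index_rvtx //=; lia.
Qed.

End RouteVertices.

Section Lindley.
Variables (R : realDomainType) (e : nat -> R).

(* Lindley's recursion started at index 1; [lindley n] is the largest sum of
   [e] over an interval [[k, n)] with [k >= 1], the empty interval included. *)
Fixpoint lindley (n : nat) : R :=
  if n is (k.+1 as m).+1 then Num.max 0 (lindley m + e m) else 0.

Lemma lindley_ge0 n : 0 <= lindley n.
Proof. by case: n => [|[|n]] //=; rewrite le_max lexx. Qed.

Lemma lindleyS n : (0 < n)%N -> lindley n.+1 = Num.max 0 (lindley n + e n).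
Proof. by case: n. Qed.

Lemma lindley_le_sum n : (0 < n)%N ->
  exists2 k, (0 < k <= n)%N & lindley n <= \sum_(k <= m < n) e m.
Proof.
elim: n => [//|[|n] IH] _; first by exists 1%N; rewrite ?big_geq.
have [k /andP[k_gt0 k_le] lin_le] := IH isT.
rewrite lindleyS // maxEle; case: ifP => _.
  exists k; first by rewrite k_gt0 leqW.
  by rewrite big_nat_recr //= lerD2r.
by exists n.+2; rewrite ?big_geq /=.
Qed.

End Lindley.

Section PathFlow.
Variables (R : realFieldType) (c : R) (D Y : nat -> R).
Hypothesis c_gt0 : 0 < c.

Lemma flow_demand_bound (F G : nat -> R) i j : (i <= j)%N ->
    (forall k, (i <= k < j)%N -> F k + D k = F k.+1 + G k) ->
    (forall k, (i <= k < j)%N -> G k <= c * Y k) ->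
    0 <= F i -> F j <= c ->
  (\sum_(i <= k < j) D k) / c - 1 <= \sum_(i <= k < j) Y k.
Proof.
move=> le_ij conserve G_le F_i_ge0 F_j_le.
have telescope : \sum_(i <= k < j) (D k - G k) = F j - F i.
  rewrite -telescope_sumr //; apply: eq_big_nat => k /conserve; lra.
have sumG_le : \sum_(i <= k < j) G k <= c * \sum_(i <= k < j) Y k.
  by rewrite mulr_sumr; apply: ler_sum_nat.
rewrite sumrB in telescope.
rewrite lerBlDr ler_pdivrMr // mulrDl mul1r mulrC; lra.
Qed.

Variable n : nat.
Hypothesis D_ge0 : forall k, (1 <= k <= n)%N -> 0 <= D k.
Hypothesis Y_ge0 : forall k, (1 <= k <= n)%N -> 0 <= Y k.
Hypothesis demand_bound : forall i j, (1 <= i)%N -> (i <= j)%N -> (j <= n)%N ->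
  (\sum_(i <= k < j.+1) D k) / c - 1 <= \sum_(i <= k < j.+1) Y k.

Let F := lindley (fun k => D k - c * Y k).

Lemma lindley_le_cap k : (1 <= k <= n.+1)%N -> F k <= c.
Proof.
case/andP=> k_gt0 k_le; rewrite /F.
have [i /andP[i_gt0]] := lindley_le_sum (fun k => D k - c * Y k) k_gt0.
rewrite leq_eqVlt => /orP[/eqP-> | lt_ik] F_le; apply: (le_trans F_le).
  by rewrite big_geq //; apply: ltW.
have le_ik1 : (i <= k.-1)%N by lia.
have le_k1n : (k.-1 <= n)%N by lia.
have := demand_bound i_gt0 le_ik1 le_k1n; rewrite prednK //.
rewrite lerBlDr ler_pdivrMr // mulrDl mul1r sumrB -mulr_sumr [_ * c]mulrC; lra.
Qed.

Lemma lindley_step_bounds k : (1 <= k <= n)%N ->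
  0 <= F k + D k - F k.+1 <= c * Y k.
Proof.
move=> k_in; have [k_gt0 _] := andP k_in.
have F_ge0 : 0 <= F k by apply: lindley_ge0.
have cY_ge0 : 0 <= c * Y k by rewrite mulr_ge0 ?Y_ge0 ?ltW.
have D_k_ge0 := D_ge0 k_in.
rewrite [F k.+1]lindleyS // maxEle -/F.
by case: (leP 0 (F k + (D k - c * Y k))) => ?; apply/andP; split; lra.
Qed.

Lemma flow_of_demand_bound : exists F G : nat -> R,
  [/\ forall k, 0 <= F k,
      forall k, (1 <= k <= n)%N -> F k + D k = F k.+1 + G k,
      forall k, (1 <= k <= n.+1)%N -> F k <= c,
      forall k, (1 <= k <= n)%N -> 0 <= G k
    & forall k, (1 <= k <= n)%N -> G k <= c * Y k].
Proof.
exists F, (fun k => F k + D k - F k.+1); split=> [k|k _|k|k|k].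
- exact: lindley_ge0.
- lra.
- exact: lindley_le_cap.
- by case/lindley_step_bounds/andP.
- by case/lindley_step_bounds/andP.
Qed.

End PathFlow.

Section RouteFlow.
Variables (R : realFieldType) (T : eqType) (depot : T) (r : seq T).
Variables (c : R) (dem y : T -> R).
Hypotheses (route_r : is_route depot r) (c_gt0 : 0 < c).

Local Notation v := (rvtx depot r).

Lemma route_flow_demand_bound (f : T -> T -> R) (g : T -> R) :
    (forall u w, u != w -> 0 <= f u w) ->
    (forall i, (1 <= i <= size r)%N ->
       f (v i.-1) (v i) + dem (v i) = f (v i) (v i.+1) + g (v i)) ->
    (forall i, (1 <= i <= (size r).+1)%N -> f (v i.-1) (v i) <= c) ->
    (forall i, (1 <= i <= size r)%N -> g (v i) <= c * y (v i)) ->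
  forall i j, (1 <= i)%N -> (i <= j)%N -> (j <= size r)%N ->
    (\sum_(i <= k < j.+1) dem (v k)) / c - 1 <= \sum_(i <= k < j.+1) y (v k).
Proof.
move=> f_ge0 conserve f_le g_le i j i_gt0 le_ij le_jn.
apply: (flow_demand_bound (F := fun k => f (v k.-1) (v k)) (G := g \o v) c_gt0)
  => [|k k_in|k k_in||].
- exact: ltnW.
- by apply: conserve; lia.
- by apply: g_le; lia.
- by apply/f_ge0/rvtx_pred_neq; rewrite ?i_gt0 ?(leq_trans le_ij le_jn).
- by apply: f_le; lia.
Qed.

Hypothesis dem_ge0 : forall w, w != depot -> 0 <= dem w.
Hypothesis y_ge0 : forall w, w != depot -> 0 <= y w.

Lemma route_flow_of_demand_bound :
    (forall i j, (1 <= i)%N -> (i <= j)%N -> (j <= size r)%N ->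
       (\sum_(i <= k < j.+1) dem (v k)) / c - 1 <= \sum_(i <= k < j.+1) y (v k)) ->
  exists (f : T -> T -> R) (g : T -> R),
    (forall u w, u != w -> 0 <= f u w) /\
    (forall w, w != depot -> 0 <= g w) /\
    (forall i, (1 <= i <= size r)%N ->
       f (v i.-1) (v i) + dem (v i) = f (v i) (v i.+1) + g (v i)) /\
    (forall i, (1 <= i <= (size r).+1)%N -> f (v i.-1) (v i) <= c) /\
    (forall i, (1 <= i <= size r)%N -> g (v i) <= c * y (v i)).
Proof.
move=> demand_bound.
have D_ge0 k : (1 <= k <= size r)%N -> 0 <= dem (v k).
  by move=> k_in; rewrite dem_ge0 // rvtx_neq_depot.
have Y_ge0 k : (1 <= k <= size r)%N -> 0 <= y (v k).
  by move=> k_in; rewrite y_ge0 // rvtx_neq_depot.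
have [F [G [F_ge0 conserve F_le G_ge0 G_le]]] :=
  flow_of_demand_bound c_gt0 D_ge0 Y_ge0 demand_bound.
have F_at i : (1 <= i <= (size r).+1)%N -> F (index (v i) r).+1 = F i.
  by move=> i_in; rewrite index_rvtx // prednK //; case/andP: i_in.
have G_at i : (1 <= i <= size r)%N ->
    (if v i \in r then G (index (v i) r).+1 else 0) = G i.
  move=> i_in; rewrite mem_rvtx // index_rvtx ?prednK //; first by case/andP: i_in.
  by case/andP: i_in => -> /leqW.
exists (fun _ w => F (index w r).+1), (fun w => if w \in r then G (index w r).+1 else 0).
split=> [//|]; split.
  by move=> w _; case: ifP => // w_in; apply: G_ge0; rewrite ltnS index_mem.
split=> [i i_in|]; last split=> [i i_in|i i_in].
- have i_in' : (1 <= i <= (size r).+1)%N by lia.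
  have i1_in : (1 <= i.+1 <= (size r).+1)%N by lia.
  by rewrite /= G_at // !F_at //; apply: conserve.
- by rewrite /= F_at //; apply: F_le.
- by rewrite G_at //; apply: G_le.
Qed.

End RouteFlow.

Theorem lemma2 (R : realFieldType) (T : finType) (depot : T) (N : nat)
    (C : rat) (d : 'I_N -> T -> rat)
    (HC : 0 < C)
    (Hd0 : forall xi v, v != depot -> 0 <= d xi v)
    (HdC : forall xi v, v != depot -> d xi v <= C)
    (r : seq T) (Hr : is_route depot r)
    (ybar : 'I_N -> T -> R)
    (Hy : forall xi v, v != depot -> 0 <= ybar xi v)
    (xi : 'I_N) :
  (exists (f : T -> T -> R) (g : T -> R),
      (forall u v, u != v -> 0 <= f u v) /\
      (forall v, v != depot -> 0 <= g v) /\
      (forall i, (1 <= i <= size r)%N ->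
         f (rvtx depot r i.-1) (rvtx depot r i) + ratr (d xi (rvtx depot r i))
         = f (rvtx depot r i) (rvtx depot r i.+1) + g (rvtx depot r i)) /\
      (forall i, (1 <= i <= (size r).+1)%N ->
         f (rvtx depot r i.-1) (rvtx depot r i) <= ratr C) /\
      (forall i, (1 <= i <= size r)%N ->
         g (rvtx depot r i) <= ratr C * ybar xi (rvtx depot r i)))
  <->
  (forall i j, (1 <= i)%N -> (i <= j)%N -> (j <= size r)%N ->
     \sum_(i <= k < j.+1) ybar xi (rvtx depot r k)
     >= (\sum_(i <= k < j.+1) ratr (d xi (rvtx depot r k))) / ratr C - 1).
Proof.
have C_gt0 : 0 < ratr C :> R by rewrite ltr0q.
split.
  case=> f [g [f_ge0 [_ [conserve [f_le g_le]]]]].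
  exact: (route_flow_demand_bound (dem := fun v => ratr (d xi v)) Hr C_gt0 f_ge0
           conserve f_le g_le).
apply: (route_flow_of_demand_bound (dem := fun v => ratr (d xi v)) Hr C_gt0 _ (Hy xi)).
by move=> v v_neq; rewrite ler0q Hd0.
Qed.
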